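(* For the SVIQS system, assume $\omega\ge\eta=\gamma$. If $R_0<1$, then the disease-free equilibrium $E^0$ is globally asymptotically stable: it is Lyapunov stable, and every solution with initial data satisfying $S_k(0),V_k(0),I_k(0),Q_k(0)\ge0$ and $S_k(0)+V_k(0)+I_k(0)+Q_k(0)=N_k^*$ for all $k$ converges to $E^0$ as $t\to\infty$.
   Context: Fix an integer $n\ge1$ and numbers $p(1),\dots,p(n)>0$ with $\sum_{k=1}^n p(k)=1$; set $\langle k\rangle=\sum_{k=1}^n kp(k)$. Fix constants $b>d>0$ and let $\Phi^*>0$ satisfy $\Phi^*=\frac{1}{\langle k\rangle}\sum_{i=1}^n \frac{i\,p(i)\,b\Phi^*}{d+bi\Phi^*}$. For $k=1,\dots,n$ put $N_k^*=\frac{bk\Phi^*}{d+bk\Phi^*}\in(0,1)$ and $\Lambda_k=bk(1-N_k^* )\Phi^*$ (so $\Lambda_k=dN_k^*>0$). Parameters: $\lambda(k)>0$, $\varphi(k)>0$, $\mu_k>0$ for $k=1,\dots,n$; constants $\beta,\gamma,\eta,\omega>0$ and $\delta\in[0,1]$. For functions $I_1(t),\dots,I_n(t)$ set $\Theta(t)=\frac{1}{\langle k\rangle}\sum_{i=1}^n\varphi(i)p(i)I_i(t)$. The SVIQS system is, for $k=1,\dots,n$: $S_k'=\Lambda_k-\lambda(k)S_k\Theta+\gamma I_k+\eta Q_k+\omega V_k-(\mu_k+d)S_k$, $V_k'=\mu_kS_k-\delta\lambda(k)V_k\Theta-(d+\omega)V_k$, $I_k'=\lambda(k)S_k\Theta+\delta\lambda(k)V_k\Theta-(\gamma+\beta+d)I_k$,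 $Q_k'=\beta I_k-(\eta+d)Q_k$. Its disease-free equilibrium $E^0$ is $S_k^0=\frac{(d+\omega)N_k^*}{\mu_k+\omega+d}$, $V_k^0=\frac{\mu_kN_k^*}{\mu_k+\omega+d}$, $I_k^0=Q_k^0=0$, and its basic reproduction number is $R_0=\frac{1}{\langle k\rangle}\sum_{i=1}^n\frac{\lambda(i)\varphi(i)p(i)\Lambda_i(\omega+d+\delta\mu_i)}{d(\gamma+\beta+d)(\omega+\mu_i+d)}$. *)

From Stdlib Require Import Reals.
Open Scope R_scope.

(* rsum n f = f 1 + f 2 + ... + f n  (indices k = 1..n as in the paper) *)
Fixpoint rsum (n : nat) (f : nat -> R) : R :=
  match n with
  | O => 0
  | S m => rsum m f + f (S m)
  end.

Definition kavg (n : nat) (p : nat -> R) : R := rsum n (fun k => INR k * p k).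

Definition Nstar (b d Phi : R) (k : nat) : R :=
  b * INR k * Phi / (d + b * INR k * Phi).

Definition Lam (b d Phi : R) (k : nat) : R :=
  b * INR k * (1 - Nstar b d Phi k) * Phi.

Definition Theta (n : nat) (p phi : nat -> R) (I : nat -> R -> R) (t : R) : R :=
  / kavg n p * rsum n (fun i => phi i * p i * I i t).

Definition R0_SVIQS (n : nat) (p : nat -> R) (b d Phi : R) (lam phi mu : nat -> R)
  (beta gamma omega delta : R) : R :=
  / kavg n p * rsum n (fun i =>
     lam i * phi i * p i * Lam b d Phi i * (omega + d + delta * mu i)
     / (d * (gamma + beta + d) * (omega + mu i + d))).

Definition Sdfe (b d Phi : R) (mu : nat -> R) (omega : R) (k : nat) : R :=
  (d + omega) * Nstar b d Phi k / (mu k + omega + d).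
Definition Vdfe (b d Phi : R) (mu : nat -> R) (omega : R) (k : nat) : R :=
  mu k * Nstar b d Phi k / (mu k + omega + d).

(* right-continuity at time 0 (solutions are only considered for t >= 0) *)
Definition rcont0 (f : R -> R) : Prop :=
  limit1_in f (fun s => 0 <= s) (f 0) 0.

Definition SVIQS_sol (n : nat) (p : nat -> R) (b d Phi : R)
  (lam phi mu : nat -> R) (beta gamma eta omega delta : R)
  (S V I Q : nat -> R -> R) : Prop :=
  forall k, (1 <= k <= n)%nat ->
    rcont0 (S k) /\ rcont0 (V k) /\ rcont0 (I k) /\ rcont0 (Q k) /\
    forall t, 0 < t ->
      derivable_pt_lim (S k) t
        (Lam b d Phi k - lam k * S k t * Theta n p phi I t + gamma * I k t
         + eta * Q k t + omega * V k t - (mu k + d) * S k t) /\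
      derivable_pt_lim (V k) t
        (mu k * S k t - delta * lam k * V k t * Theta n p phi I t
         - (d + omega) * V k t) /\
      derivable_pt_lim (I k) t
        (lam k * S k t * Theta n p phi I t
         + delta * lam k * V k t * Theta n p phi I t
         - (gamma + beta + d) * I k t) /\
      derivable_pt_lim (Q k) t (beta * I k t - (eta + d) * Q k t).

Definition feasible_init (n : nat) (b d Phi : R) (S V I Q : nat -> R -> R) : Prop :=
  forall k, (1 <= k <= n)%nat ->
    0 <= S k 0 /\ 0 <= V k 0 /\ 0 <= I k 0 /\ 0 <= Q k 0 /\
    S k 0 + V k 0 + I k 0 + Q k 0 = Nstar b d Phi k.

(* Each population [N_k = S_k + V_k + I_k + Q_k] solves [N_k' = d (N_k^* - N_k)], hence stays
   equal to [N_k^*]; a first-exit argument, with all compartments shifted by [eps e^(M t)] for a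
   rate [M] dominating every possible decrease, keeps them nonnegative.
   Since [eta = gamma <= omega], [S_k' <= (d + omega) N_k^* - (mu_k + d + omega) S_k], so
   [S_k + delta V_k] exceeds its value at [E^0] by at most [c e^(-(d + omega) t)], where [c]
   measures the initial distance of [S] to [E^0].  Hence
   [Theta' <= Theta (c e^(-(d + omega) t) - (gamma + beta + d) (1 - R0))]: when [R0 < 1], [Theta]
   eventually decays exponentially, and it is nonincreasing from the start if the initial data are
   close to [E^0].  Linear comparison passes this to [I_k], then [Q_k], then [V_k], and
   conservation gives [S_k]. *)

From Stdlib Require Import Reals Lra Lia List Classical.
Import ListNotations.
Open Scope R_scope.

Definition right_cont (f : R -> R) (a : R) : Prop :=
  limit1_in f (fun s => a <= s) (f a) a.

Definition eventually (P : R -> Prop) : Prop := exists T, forall t, T <= t -> P t.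

Lemma derivable_pt_lim_exp_scal (r x : R) :
  derivable_pt_lim (fun t => exp (r * t)) x (r * exp (r * x)).
Proof.
  assert (Hlin : derivable_pt_lim (fun t => r * t) x r).
  { apply (derivable_pt_lim_ext (fun t => r * id t)); [reflexivity|].
    pose proof (derivable_pt_lim_scal id r x 1 (derivable_pt_lim_id x)) as H.
    now rewrite Rmult_1_r in H. }
  rewrite Rmult_comm.
  exact (derivable_pt_lim_comp _ exp x r _ Hlin (derivable_pt_lim_exp _)).
Qed.

Lemma right_cont_of_continuity_pt f a : continuity_pt f a -> right_cont f a.
Proof.
  intros H eps Heps. destruct (H eps Heps) as [alp [Ha Hb]]. exists alp. split; auto.
  intros x [Hx1 Hx2]. destruct (Req_dec a x) as [<-|Hne].
  - simpl. unfold R_dist. rewrite Rminus_diag, Rabs_R0. lra.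
  - apply Hb. repeat split; auto.
Qed.

Lemma right_cont_of_derivable_pt_lim f a l : derivable_pt_lim f a l -> right_cont f a.
Proof.
  intros H. apply right_cont_of_continuity_pt, derivable_continuous_pt. now exists l.
Qed.

Lemma right_cont_const c a : right_cont (fun _ => c) a.
Proof. apply right_cont_of_continuity_pt, continuity_pt_const. now intros x y. Qed.

Lemma right_cont_plus f g a :
  right_cont f a -> right_cont g a -> right_cont (fun t => f t + g t) a.
Proof. intros; now apply limit_plus. Qed.

Lemma right_cont_mult f g a :
  right_cont f a -> right_cont g a -> right_cont (fun t => f t * g t) a.
Proof. intros; now apply limit_mul. Qed.

Lemma right_cont_opp f a : right_cont f a -> right_cont (fun t => - f t) a.
Proof. intros; now apply limit_Ropp. Qed.

Lemma right_cont_of_rcont0 (f f' : R -> R) a : rcont0 f ->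
  (forall t, 0 < t -> derivable_pt_lim f t (f' t)) -> 0 <= a -> right_cont f a.
Proof.
  intros H0 Hder Ha. destruct (Req_dec a 0) as [->|]; [exact H0|].
  exact (right_cont_of_derivable_pt_lim _ _ _ (Hder a ltac:(lra))).
Qed.

Lemma right_cont_near f a : right_cont f a -> forall eps, 0 < eps ->
  exists alp, 0 < alp /\ forall s, a <= s < a + alp -> Rabs (f s - f a) < eps.
Proof.
  intros H eps He. destruct (H eps He) as [alp [Ha Hb]]. exists alp. split; auto.
  intros s Hs. apply (Hb s). split; [lra|]. simpl. unfold R_dist. rewrite Rabs_right; lra.
Qed.

Lemma positive_near_list {J : Type} (l : list J) (G : J -> R -> R) a :
  (forall j, In j l -> right_cont (G j) a /\ 0 < G j a) ->
  exists del, 0 < del /\ forall s, a <= s < a + del -> forall j, In j l -> 0 < G j s.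
Proof.
  induction l as [|j0 l IH]; intros H.
  - exists 1. split; [lra|]. intros s _ j [].
  - destruct IH as [d1 [Hd1 H1]]; [intros j Hj; apply H; now right|].
    destruct (H j0 (or_introl eq_refl)) as [Hrc Hpos].
    destruct (right_cont_near _ _ Hrc (G j0 a) Hpos) as [d2 [Hd2 H2]].
    exists (Rmin d1 d2). split; [now apply Rmin_pos|].
    intros s Hs j [<-|Hj]; pose proof (Rmin_l d1 d2); pose proof (Rmin_r d1 d2).
    + specialize (H2 s ltac:(lra)). apply Rabs_def2 in H2. lra.
    + apply H1; [lra|assumption].
Qed.

Lemma le_of_deriv_nonpos (h h' : R -> R) a b : a <= b ->
  (forall t, a < t -> derivable_pt_lim h t (h' t)) ->
  (forall t, a < t -> h' t <= 0) -> right_cont h a -> h b <= h a.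
Proof.
  intros Hab Hd Hn Hrc.
  destruct (Req_dec a b) as [<-|Hne]; [lra|].
  assert (Hs : forall s, a < s < b -> h b <= h s).
  { intros s Hs. destruct (MVT_cor2 h h' s b) as [c [Hc1 Hc2]]; [lra| |].
    - intros c Hc. apply Hd. lra.
    - assert (h' c <= 0) by (apply Hn; lra). nra. }
  destruct (Rle_dec (h b) (h a)) as [|Hgt]; auto. exfalso.
  destruct (right_cont_near h a Hrc (h b - h a)) as [alp [Ha Hb]]; [lra|].
  set (s := a + Rmin alp (b - a) / 2).
  pose proof (Rmin_l alp (b - a)). pose proof (Rmin_r alp (b - a)).
  assert (0 < Rmin alp (b - a)) by (apply Rmin_pos; lra).
  specialize (Hb s ltac:(unfold s; lra)). specialize (Hs s ltac:(unfold s; lra)).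
  apply Rabs_def2 in Hb. lra.
Qed.

Lemma deriv_le_comparison (f f' : R -> R) r G a : 0 < r ->
  (forall t, a < t -> derivable_pt_lim f t (f' t)) ->
  (forall t, a < t -> f' t <= G - r * f t) -> right_cont f a ->
  forall t, a <= t -> f t <= G / r + (f a - G / r) * exp (- r * (t - a)).
Proof.
  intros Hr Hd Hb Hrc t Ht.
  set (h := fun s => (f s - G / r) * exp (r * s)).
  assert (Hm : h t <= h a).
  { apply (le_of_deriv_nonpos h (fun s => (f' s + r * f s - G) * exp (r * s)) a t Ht).
    - intros s Hs. unfold h.
      replace ((f' s + r * f s - G) * exp (r * s))
        with ((f' s - 0) * exp (r * s) + (f s - G / r) * (r * exp (r * s))) by (field; lra).
      apply (derivable_pt_lim_mult (fun s => f s - G / r) (fun s => exp (r * s))).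
      + apply (derivable_pt_lim_minus f (fun _ => G / r));
          [apply Hd; lra | apply derivable_pt_lim_const].
      + apply derivable_pt_lim_exp_scal.
    - intros s Hs. specialize (Hb s Hs). pose proof (exp_pos (r * s)). nra.
    - apply (right_cont_mult (fun s => f s - G / r)).
      + apply (right_cont_plus f (fun _ => - (G / r))); auto using right_cont_const.
      + exact (right_cont_of_derivable_pt_lim _ _ _ (derivable_pt_lim_exp_scal r a)). }
  unfold h in Hm.
  assert (E : exp (r * t) * exp (- r * (t - a)) = exp (r * a)).
  { rewrite <- exp_plus. f_equal. ring. }
  pose proof (exp_pos (- r * (t - a))). pose proof (exp_pos (r * t)).
  apply Rmult_le_compat_r with (r := exp (- r * (t - a))) in Hm; [|lra].
  rewrite Rmult_assoc, E in Hm.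
  pose proof (exp_pos (r * a)). nra.
Qed.

Lemma deriv_ge_comparison (f f' : R -> R) r G a : 0 < r ->
  (forall t, a < t -> derivable_pt_lim f t (f' t)) ->
  (forall t, a < t -> G - r * f t <= f' t) -> right_cont f a ->
  forall t, a <= t -> G / r + (f a - G / r) * exp (- r * (t - a)) <= f t.
Proof.
  intros Hr Hd Hb Hrc t Ht.
  assert (H : - f t <= - G / r + (- f a - - G / r) * exp (- r * (t - a))).
  { apply (deriv_le_comparison (fun s => - f s) (fun s => - f' s)); auto.
    - intros s Hs. now apply derivable_pt_lim_opp, Hd.
    - intros s Hs. specialize (Hb s Hs). lra.
    - now apply right_cont_opp. }
  replace (- G / r) with (- (G / r)) in H by (field; lra). lra.
Qed.

Lemma exp_neg_le_1 r s : 0 <= r -> 0 <= s -> exp (- r * s) <= 1.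
Proof.
  intros. rewrite <- exp_0. destruct (Req_dec (r * s) 0) as [E|E].
  - right. f_equal. lra.
  - left. apply exp_increasing. nra.
Qed.

Lemma le_Rmax_of_deriv_le (f f' : R -> R) r G a : 0 < r ->
  (forall t, a < t -> derivable_pt_lim f t (f' t)) ->
  (forall t, a < t -> f' t <= G - r * f t) -> right_cont f a ->
  forall t, a <= t -> f t <= Rmax (G / r) (f a).
Proof.
  intros Hr Hd Hb Hrc t Ht. pose proof (deriv_le_comparison f f' r G a Hr Hd Hb Hrc t Ht).
  pose proof (exp_pos (- r * (t - a))). pose proof (exp_neg_le_1 r (t - a) ltac:(lra) ltac:(lra)).
  pose proof (Rmax_l (G / r) (f a)). pose proof (Rmax_r (G / r) (f a)).
  destruct (Rle_dec (f a) (G / r)); nra.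
Qed.

Lemma Rmin_le_of_deriv_ge (f f' : R -> R) r G a : 0 < r ->
  (forall t, a < t -> derivable_pt_lim f t (f' t)) ->
  (forall t, a < t -> G - r * f t <= f' t) -> right_cont f a ->
  forall t, a <= t -> Rmin (G / r) (f a) <= f t.
Proof.
  intros Hr Hd Hb Hrc t Ht. pose proof (deriv_ge_comparison f f' r G a Hr Hd Hb Hrc t Ht).
  pose proof (exp_pos (- r * (t - a))). pose proof (exp_neg_le_1 r (t - a) ltac:(lra) ltac:(lra)).
  pose proof (Rmin_l (G / r) (f a)). pose proof (Rmin_r (G / r) (f a)).
  destruct (Rle_dec (f a) (G / r)); nra.
Qed.

Lemma eventually_exp_decay_le C r a x : 0 < r -> 0 < x ->
  eventually (fun t => Rabs C * exp (- r * (t - a)) <= x).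
Proof.
  intros Hr Hx. exists (Rmax a (a + Rabs C / (x * r))). intros t Ht.
  pose proof (Rmax_l a (a + Rabs C / (x * r))). pose proof (Rmax_r a (a + Rabs C / (x * r))).
  pose proof (Rabs_pos C). pose proof (exp_pos (- r * (t - a))).
  (* e^{r(t-a)} >= 1 + r (t-a) >= |C| / x *)
  assert (Hlin : Rabs C <= x * (r * (t - a))).
  { assert (E : Rabs C = x * r * (Rabs C / (x * r))) by (field; lra).
    rewrite E, Rmult_assoc. apply Rmult_le_compat_l; [lra|].
    apply Rmult_le_compat_l; lra. }
  pose proof (exp_ineq1_le (r * (t - a))).
  assert (E : exp (- r * (t - a)) * exp (r * (t - a)) = 1).
  { rewrite <- exp_plus, <- exp_0. f_equal. ring. }
  apply Rle_trans with (x * (r * (t - a)) * exp (- r * (t - a))).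
  - apply Rmult_le_compat_r; lra.
  - assert (x * (r * (t - a)) <= x * exp (r * (t - a))) by (apply Rmult_le_compat_l; lra).
    nra.
Qed.

Lemma eventually_and (P Q : R -> Prop) :
  eventually P -> eventually Q -> eventually (fun t => P t /\ Q t).
Proof.
  intros [T1 H1] [T2 H2]. exists (Rmax T1 T2). intros t Ht.
  pose proof (Rmax_l T1 T2). pose proof (Rmax_r T1 T2). split; [apply H1|apply H2]; lra.
Qed.

Lemma eventually_le_of_deriv_le (f f' g : R -> R) r G : 0 < r ->
  (forall t, 0 < t -> derivable_pt_lim f t (f' t)) ->
  (forall t, 0 < t -> f' t <= g t - r * f t) ->
  (forall x, 0 < x -> eventually (fun t => g t <= G + x)) ->
  forall x, 0 < x -> eventually (fun t => f t <= G / r + x).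
Proof.
  intros Hr Hd Hb Hg x Hx.
  destruct (Hg (r * x / 2) ltac:(nra)) as [T0 HT0].
  pose proof (Rmax_l T0 1). pose proof (Rmax_r T0 1). set (a := Rmax T0 1) in *.
  assert (Hcmp := deriv_le_comparison f f' r (G + r * x / 2) a Hr).
  destruct (eventually_exp_decay_le (f a - (G + r * x / 2) / r) r a (x / 2) Hr ltac:(lra))
    as [T1 HT1].
  exists (Rmax a T1). intros t Ht.
  pose proof (Rmax_l a T1). pose proof (Rmax_r a T1).
  specialize (Hcmp ltac:(intros s Hs; apply Hd; lra)).
  specialize (Hcmp ltac:(intros s Hs; specialize (Hb s ltac:(lra));
                         specialize (HT0 s ltac:(lra)); lra)).
  specialize (Hcmp (right_cont_of_derivable_pt_lim _ _ _ (Hd a ltac:(lra))) t ltac:(lra)).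
  specialize (HT1 t ltac:(lra)).
  pose proof (Rle_abs (f a - (G + r * x / 2) / r)). pose proof (exp_pos (- r * (t - a))).
  replace ((G + r * x / 2) / r) with (G / r + x / 2) in * by (field; lra). nra.
Qed.

Lemma eventually_ge_of_deriv_ge (f f' g : R -> R) r G : 0 < r ->
  (forall t, 0 < t -> derivable_pt_lim f t (f' t)) ->
  (forall t, 0 < t -> g t - r * f t <= f' t) ->
  (forall x, 0 < x -> eventually (fun t => G - x <= g t)) ->
  forall x, 0 < x -> eventually (fun t => G / r - x <= f t).
Proof.
  intros Hr Hd Hb Hg x Hx.
  destruct (eventually_le_of_deriv_le (fun t => - f t) (fun t => - f' t) (fun t => - g t)
              r (- G) Hr) with (x := x) as [T HT]; auto.
  - intros t Ht. now apply derivable_pt_lim_opp, Hd.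
  - intros t Ht. specialize (Hb t Ht). lra.
  - intros y Hy. destruct (Hg y Hy) as [T HT]. exists T. intros t Ht. specialize (HT t Ht). lra.
  - exists T. intros t Ht. specialize (HT t Ht).
    replace (- G / r) with (- (G / r)) in HT by (field; lra). lra.
Qed.

Lemma deriv_nonpos_at_first_zero h t l : 0 < t -> derivable_pt_lim h t l -> h t = 0 ->
  (forall s, 0 <= s < t -> 0 < h s) -> l <= 0.
Proof.
  intros Ht Hd H0 Hpos. destruct (Rle_dec l 0) as [|Hl]; auto. exfalso.
  destruct (Hd l ltac:(lra)) as [del Hdel]. pose proof (cond_pos del).
  set (hh := - (Rmin del t / 2)).
  pose proof (Rmin_l del t). pose proof (Rmin_r del t).
  assert (0 < Rmin del t) by (apply Rmin_pos; lra).
  specialize (Hdel hh ltac:(unfold hh; lra)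
                ltac:(unfold hh; rewrite Rabs_Ropp, Rabs_right; lra)).
  rewrite H0, Rminus_0_r in Hdel.
  assert (0 < h (t + hh)) by (apply Hpos; unfold hh; lra).
  assert (h (t + hh) / hh < 0).
  { apply Rmult_pos_neg; auto. apply Rinv_lt_0_compat. unfold hh; lra. }
  apply Rabs_def2 in Hdel. lra.
Qed.

Lemma nonneg_of_pos_before h t : 0 < t -> continuity_pt h t ->
  (forall s, 0 <= s < t -> 0 < h s) -> 0 <= h t.
Proof.
  intros Ht Hc Hpos. destruct (Rle_dec 0 (h t)) as [|Hn]; auto. exfalso.
  destruct (Hc (- h t) ltac:(lra)) as [alp [Ha Hb]].
  set (s := t - Rmin alp t / 2).
  pose proof (Rmin_l alp t). pose proof (Rmin_r alp t).
  assert (0 < Rmin alp t) by (apply Rmin_pos; lra).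
  assert (Hs : D_x no_cond t s /\ R_dist s t < alp).
  { repeat split; unfold s; try lra. unfold R_dist. rewrite Rabs_left; lra. }
  specialize (Hb s Hs). specialize (Hpos s ltac:(unfold s; lra)).
  simpl in Hb. unfold R_dist in Hb. apply Rabs_def2 in Hb. lra.
Qed.

Lemma rsum_le m f g :
  (forall k, (1 <= k <= m)%nat -> f k <= g k) -> rsum m f <= rsum m g.
Proof.
  induction m; intros H; simpl; [lra|].
  assert (rsum m f <= rsum m g) by (apply IHm; intros; apply H; lia).
  assert (f (S m) <= g (S m)) by (apply H; lia). lra.
Qed.

Lemma rsum_ext m f g :
  (forall k, (1 <= k <= m)%nat -> f k = g k) -> rsum m f = rsum m g.
Proof. intros H. apply Rle_antisym; apply rsum_le; intros k Hk; rewrite (H k Hk); lra. Qed.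

Lemma rsum_plus m f g : rsum m (fun k => f k + g k) = rsum m f + rsum m g.
Proof. induction m; simpl; [ring|]. rewrite IHm. ring. Qed.

Lemma rsum_minus m f g : rsum m (fun k => f k - g k) = rsum m f - rsum m g.
Proof. induction m; simpl; [ring|]. rewrite IHm. ring. Qed.

Lemma rsum_scal m c f : rsum m (fun k => c * f k) = c * rsum m f.
Proof. induction m; simpl; [ring|]. rewrite IHm. ring. Qed.

Lemma rsum_nonneg m f : (forall k, (1 <= k <= m)%nat -> 0 <= f k) -> 0 <= rsum m f.
Proof.
  induction m; intros H; simpl; [lra|].
  assert (0 <= rsum m f) by (apply IHm; intros; apply H; lia).
  assert (0 <= f (S m)) by (apply H; lia). lra.
Qed.

Lemma rsum_pos m f : (1 <= m)%nat ->
  (forall k, (1 <= k <= m)%nat -> 0 < f k) -> 0 < rsum m f.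
Proof.
  intros Hm H. destruct m; [lia|]. simpl.
  assert (0 <= rsum m f) by (apply rsum_nonneg; intros; left; apply H; lia).
  assert (0 < f (S m)) by (apply H; lia). lra.
Qed.

Lemma rsum_term_le m f j : (forall k, (1 <= k <= m)%nat -> 0 <= f k) ->
  (1 <= j <= m)%nat -> f j <= rsum m f.
Proof.
  induction m; intros H Hj; [lia|]. simpl.
  assert (0 <= rsum m f) by (apply rsum_nonneg; intros; apply H; lia).
  assert (0 <= f (S m)) by (apply H; lia).
  destruct (Nat.eq_dec j (S m)) as [->|Hne]; [lra|].
  assert (f j <= rsum m f) by (apply IHm; [intros; apply H|]; lia). lra.
Qed.

Lemma derivable_pt_lim_rsum m (F : nat -> R -> R) (F' : nat -> R) t :
  (forall k, (1 <= k <= m)%nat -> derivable_pt_lim (F k) t (F' k)) ->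
  derivable_pt_lim (fun s => rsum m (fun k => F k s)) t (rsum m F').
Proof.
  induction m; intros H; simpl.
  - apply derivable_pt_lim_const.
  - apply (derivable_pt_lim_plus (fun s => rsum m (fun k => F k s)) (F (S m)));
      [apply IHm; intros|]; apply H; lia.
Qed.

Lemma right_cont_rsum m (F : nat -> R -> R) a :
  (forall k, (1 <= k <= m)%nat -> right_cont (F k) a) ->
  right_cont (fun s => rsum m (fun k => F k s)) a.
Proof.
  induction m; intros H; simpl.
  - apply right_cont_const.
  - apply (right_cont_plus (fun s => rsum m (fun k => F k s)) (F (S m)));
      [apply IHm; intros|]; apply H; lia.
Qed.

Lemma Rmult_lower_bound x y a A c B : 0 <= a -> 0 <= c -> 0 <= A -> 0 <= B ->
  - a <= x <= A -> - c <= y <= B -> - (A * c + a * B) <= x * y.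
Proof.
  intros Ha Hc HA HB Hx Hy.
  assert (0 <= A * c) by nra. assert (0 <= a * B) by nra.
  destruct (Rle_dec 0 x); destruct (Rle_dec 0 y); nra.
Qed.

Section QuasiPositivity.
Variables (J : Type) (js : list J) (F F' : J -> R -> R) (M : R).
Hypotheses (HM : 0 <= M)
  (HF0 : forall j, In j js -> right_cont (F j) 0 /\ 0 <= F j 0)
  (HFd : forall j t, In j js -> 0 < t -> derivable_pt_lim (F j) t (F' j t))
  (HFqp : forall j t e, In j js -> 0 < t -> 0 < e <= 1 ->
     (forall i, In i js -> - e <= F i t) -> F j t = - e -> - (M * e) < F' j t).

Section Perturbed.
Variables (T eps : R).
Hypotheses (HT : 0 < T) (Heps : 0 < eps) (HepsT : eps * exp (M * T) <= 1).

Let e s := eps * exp (M * s).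
Let positive_at s := forall j, In j js -> 0 < F j s + e s.

Lemma perturbation_deriv s : derivable_pt_lim e s (M * e s).
Proof.
  unfold e. replace (M * (eps * exp (M * s))) with (eps * (M * exp (M * s))) by ring.
  apply derivable_pt_lim_scal, derivable_pt_lim_exp_scal.
Qed.

Lemma perturbation_le_1 s : s <= T -> e s <= 1.
Proof.
  intros Hs. unfold e. assert (exp (M * s) <= exp (M * T)).
  { destruct (Req_dec (M * s) (M * T)) as [E|E]; [rewrite E; lra|].
    left. apply exp_increasing. nra. }
  pose proof (exp_pos (M * s)). nra.
Qed.

Lemma perturbed_positive_near a : 0 <= a -> positive_at a ->
  exists del, 0 < del /\ forall s, a <= s < a + del -> positive_at s.
Proof.
  intros Ha Hpos. apply (positive_near_list js (fun j s => F j s + e s)).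
  intros j Hj. split; [|now apply Hpos].
  apply right_cont_plus.
  - destruct (Req_dec a 0) as [->|]; [now apply HF0|].
    apply (right_cont_of_derivable_pt_lim _ _ _ (HFd j a Hj ltac:(lra))).
  - apply (right_cont_of_derivable_pt_lim _ _ _ (perturbation_deriv a)).
Qed.

Lemma perturbed_positive_at_first_exit t : 0 < t <= T ->
  (forall s, 0 <= s < t -> positive_at s) -> positive_at t.
Proof.
  intros Ht Hbefore.
  assert (Hd : forall j, In j js ->
            derivable_pt_lim (fun s => F j s + e s) t (F' j t + M * e t)).
  { intros j Hj. apply (derivable_pt_lim_plus (F j) e);
      [apply HFd; auto; lra | apply perturbation_deriv]. }
  assert (Hweak : forall i, In i js -> - e t <= F i t).
  { intros i Hi. enough (0 <= F i t + e t) by lra.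
    apply (nonneg_of_pos_before (fun s => F i s + e s)); [lra| |].
    - apply derivable_continuous_pt. eexists. now apply Hd.
    - intros s Hs. now apply Hbefore. }
  intros j Hj. destruct (Req_dec (F j t + e t) 0) as [Hz|Hnz].
  - (* the perturbation outruns the worst possible decrease at a first zero *)
    exfalso.
    assert (Hcross : F' j t + M * e t <= 0).
    { apply (deriv_nonpos_at_first_zero (fun s => F j s + e s) t); auto; [lra|].
      intros s Hs. now apply Hbefore. }
    assert (He : 0 < e t) by (apply Rmult_lt_0_compat; auto using exp_pos).
    pose proof (HFqp j t (e t) Hj ltac:(lra) (conj He (perturbation_le_1 t ltac:(lra)))
                  Hweak ltac:(lra)).
    lra.
  - specialize (Hweak j Hj). lra.
Qed.

Lemma perturbed_positive : positive_at T.
Proof.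
  set (A t := 0 <= t <= T /\ forall s, 0 <= s <= t -> positive_at s).
  assert (HA0 : A 0).
  { split; [lra|]. intros s Hs j Hj. replace s with 0 by lra.
    assert (0 < e 0) by (apply Rmult_lt_0_compat; auto using exp_pos).
    pose proof (proj2 (HF0 j Hj)). lra. }
  destruct (completeness A (ex_intro _ T (fun t At => proj2 (proj1 At))) (ex_intro _ 0 HA0))
    as [t1 [Hub Hlub]].
  assert (Ht1T : t1 <= T) by (apply Hlub; intros t [Ht _]; lra).
  assert (Hbefore : forall s, 0 <= s < t1 -> positive_at s).
  { intros s Hs. apply NNPP. intros Hns. enough (t1 <= s) by lra.
    apply Hlub. intros t [_ Ht]. apply Rnot_lt_le. intros Hst. apply Hns, Ht. lra. }
  assert (Hext : forall a, 0 <= a -> a < T -> (forall s, 0 <= s <= a -> positive_at s) ->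
                 exists t, a < t /\ A t).
  { intros a Ha HaT Hpos.
    destruct (perturbed_positive_near a Ha (Hpos a ltac:(lra))) as [del [Hdel Hnear]].
    pose proof (Rmin_l (a + del / 2) T). pose proof (Rmin_r (a + del / 2) T).
    assert (a < Rmin (a + del / 2) T) by (apply Rmin_glb_lt; lra).
    exists (Rmin (a + del / 2) T). split; [assumption|]. split; [lra|].
    intros s Hs. destruct (Rle_dec s a); [apply Hpos|apply Hnear]; lra. }
  assert (Ht1 : 0 < t1).
  { destruct (Hext 0 ltac:(lra) HT (proj2 HA0)) as [t [Ht At]]. specialize (Hub t At). lra. }
  assert (Hat : positive_at t1) by (apply perturbed_positive_at_first_exit; auto).
  destruct (Rle_dec T t1) as [HTt|HTt]; [now replace T with t1 by lra|].
  exfalso. destruct (Hext t1 ltac:(lra) ltac:(lra)) as [t [Ht At]].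
  - intros s Hs. destruct (Req_dec s t1) as [->|]; [assumption|apply Hbefore; lra].
  - specialize (Hub t At). lra.
Qed.

End Perturbed.

Lemma quasipositive_nonneg j t : In j js -> 0 <= t -> 0 <= F j t.
Proof.
  intros Hj Ht. destruct (Req_dec t 0) as [->|Ht0]; [now apply HF0|].
  destruct (Rle_dec 0 (F j t)) as [|Hneg]; auto. exfalso.
  set (u := exp (- M * t)).
  assert (Hu : u * exp (M * t) = 1).
  { unfold u. rewrite <- exp_plus, <- exp_0. f_equal. ring. }
  assert (0 < u) by apply exp_pos. pose proof (exp_pos (M * t)).
  assert (0 < Rmin u (- F j t / 2 * u)) by (apply Rmin_pos; nra).
  pose proof (Rmin_l u (- F j t / 2 * u)). pose proof (Rmin_r u (- F j t / 2 * u)).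
  set (eps := Rmin u (- F j t / 2 * u)) in *.
  assert (Hle : eps * exp (M * t) <= - F j t / 2).
  { apply Rle_trans with (- F j t / 2 * u * exp (M * t)); [apply Rmult_le_compat_r; lra|].
    rewrite Rmult_assoc, Hu. lra. }
  assert (eps * exp (M * t) <= 1).
  { apply Rle_trans with (u * exp (M * t)); [apply Rmult_le_compat_r|]; lra. }
  pose proof (perturbed_positive t eps ltac:(lra) ltac:(assumption) ltac:(assumption) j Hj).
  simpl in *. lra.
Qed.

End QuasiPositivity.

Inductive compartment : Set := Susc | Vacc | Inf | Quar.

Section Model.
Variables (n : nat) (p : nat -> R) (b d Phi : R)
  (lam phi mu : nat -> R) (beta gamma eta omega delta : R).
Hypotheses (Hn : (1 <= n)%nat)
  (Hp : forall k, (1 <= k <= n)%nat -> 0 < p k)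
  (Hd : 0 < d) (Hb : 0 < b) (HPhi : 0 < Phi)
  (Hlam : forall k, (1 <= k <= n)%nat -> 0 < lam k)
  (Hphi : forall k, (1 <= k <= n)%nat -> 0 < phi k)
  (Hmu : forall k, (1 <= k <= n)%nat -> 0 < mu k)
  (Hbeta : 0 < beta) (Heta : 0 < eta) (Homega : 0 < omega)
  (Hdelta : 0 <= delta <= 1) (Hoe : eta <= omega) (Heg : eta = gamma).

Local Notation Ns := (Nstar b d Phi).
Local Notation Sd := (Sdfe b d Phi mu omega).
Local Notation Vd := (Vdfe b d Phi mu omega).
Local Notation cc := (gamma + beta + d).
Local Notation rV k := (mu k + d + omega).
Local Notation R0 := (R0_SVIQS n p b d Phi lam phi mu beta gamma omega delta).

Lemma kavg_pos : 0 < kavg n p.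
Proof.
  apply rsum_pos; auto. intros k Hk.
  apply Rmult_lt_0_compat; [apply lt_0_INR; lia|auto].
Qed.

Lemma contact_rate_pos k : (1 <= k <= n)%nat -> 0 < b * INR k * Phi.
Proof.
  intros Hk. pose proof (lt_0_INR k ltac:(lia)).
  apply Rmult_lt_0_compat; [apply Rmult_lt_0_compat|]; lra.
Qed.

Lemma Nstar_pos k : (1 <= k <= n)%nat -> 0 < Ns k /\ Ns k <= 1.
Proof.
  intros Hk. pose proof (contact_rate_pos k Hk). unfold Nstar.
  split; [apply Rdiv_lt_0_compat; lra|].
  apply Rmult_le_reg_r with (d + b * INR k * Phi); [lra|].
  unfold Rdiv. rewrite Rmult_assoc, Rinv_l by lra. lra.
Qed.

Lemma Lam_eq k : (1 <= k <= n)%nat -> Lam b d Phi k = d * Ns k.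
Proof.
  intros Hk. pose proof (contact_rate_pos k Hk). unfold Lam, Nstar. field. lra.
Qed.

Lemma Sdfe_eq k : Sd k = (d + omega) * Ns k / rV k.
Proof. unfold Sdfe. f_equal. ring. Qed.

Lemma Vdfe_eq k : Vd k = mu k * Ns k / rV k.
Proof. unfold Vdfe. f_equal. ring. Qed.

Lemma Sdfe_plus_Vdfe k : (1 <= k <= n)%nat -> Sd k + Vd k = Ns k.
Proof. intros Hk. pose proof (Hmu k Hk). unfold Sdfe, Vdfe. field. lra. Qed.

Lemma R0_eq : cc * R0 =
  / kavg n p * rsum n (fun i => lam i * phi i * p i * (Sd i + delta * Vd i)).
Proof.
  unfold R0_SVIQS. rewrite <- Rmult_assoc, (Rmult_comm _ (/ _)), Rmult_assoc.
  f_equal. rewrite <- rsum_scal. apply rsum_ext. intros k Hk.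
  rewrite Lam_eq by auto. pose proof (Hmu k Hk). unfold Sdfe, Vdfe. field. lra.
Qed.

Definition Kphi := / kavg n p * rsum n (fun i => phi i * p i).
Definition Klam := / kavg n p * rsum n (fun i => lam i * phi i * p i).

Lemma Kphi_pos : 0 < Kphi.
Proof.
  pose proof kavg_pos. apply Rmult_lt_0_compat; [now apply Rinv_0_lt_compat|].
  apply rsum_pos; auto. intros k Hk. apply Rmult_lt_0_compat; auto.
Qed.

Lemma Klam_pos : 0 < Klam.
Proof.
  pose proof kavg_pos. apply Rmult_lt_0_compat; [now apply Rinv_0_lt_compat|].
  apply rsum_pos; auto. intros k Hk. repeat apply Rmult_lt_0_compat; auto.
Qed.

Lemma lam_le_sum k : (1 <= k <= n)%nat -> 0 < lam k <= rsum n lam.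
Proof.
  intros Hk. split; auto. apply rsum_term_le; auto. intros; left; auto.
Qed.

Lemma mu_le_sum k : (1 <= k <= n)%nat -> 0 < mu k <= rsum n mu.
Proof.
  intros Hk. split; auto. apply rsum_term_le; auto. intros; left; auto.
Qed.

(* Dominates the rate at which a compartment at level [-e] can decrease while all are [>= -e]. *)
Definition Mrate := 1 + gamma + eta + omega + beta + rsum n mu + 16 * rsum n lam * Kphi.

(* Near [E^0] the deviations of [I], [Q], [V] stay below these multiples of the initial one. *)
Definition lam_Nstar_sum := rsum n (fun k => lam k * Ns k).
Definition I_gain := lam_Nstar_sum * Kphi / cc + 1.
Definition Q_gain := beta * I_gain / (eta + d) + 1.
Definition V_gain := I_gain + Q_gain + lam_Nstar_sum * Kphi / (d + omega) + 1.

Lemma lam_Nstar_le_sum k : (1 <= k <= n)%nat -> 0 < lam k * Ns k <= lam_Nstar_sum.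
Proof.
  intros Hk. assert (Hpos : forall i, (1 <= i <= n)%nat -> 0 < lam i * Ns i).
  { intros i Hi. apply Rmult_lt_0_compat; [auto|apply Nstar_pos; auto]. }
  split; auto. apply (rsum_term_le n (fun i => lam i * Ns i)); auto.
  intros; left; auto.
Qed.

Lemma gains_ge_1 : 1 <= I_gain /\ 1 <= Q_gain /\ 1 <= V_gain.
Proof.
  pose proof (lam_Nstar_le_sum 1 ltac:(lia)). pose proof Kphi_pos.
  assert (0 <= lam_Nstar_sum * Kphi) by nra.
  assert (0 <= lam_Nstar_sum * Kphi / cc)
    by (apply Rmult_le_pos; [|left; apply Rinv_0_lt_compat]; lra).
  assert (0 <= lam_Nstar_sum * Kphi / (d + omega))
    by (apply Rmult_le_pos; [|left; apply Rinv_0_lt_compat]; lra).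
  assert (0 <= beta * I_gain / (eta + d))
    by (unfold I_gain; apply Rmult_le_pos; [apply Rmult_le_pos|left; apply Rinv_0_lt_compat]; lra).
  unfold V_gain, Q_gain, I_gain in *. lra.
Qed.

Lemma Vdfe_minus_gain_le k dl : (1 <= k <= n)%nat -> 0 <= dl ->
  Vd k - V_gain * dl <=
  (mu k * Ns k - mu k * (I_gain * dl + Q_gain * dl) - delta * lam k * Ns k * (Kphi * dl)) / rV k.
Proof.
  intros Hk Hdl. pose proof (Hmu k Hk). pose proof (lam_Nstar_le_sum k Hk). pose proof Kphi_pos.
  destruct gains_ge_1 as [HIg [HQg HVg]].
  rewrite Vdfe_eq.
  apply Rmult_le_reg_r with (rV k); [lra|].
  replace ((mu k * Ns k / rV k - V_gain * dl) * rV k) with (mu k * Ns k - rV k * V_gain * dl)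
    by (field; lra).
  replace ((mu k * Ns k - mu k * (I_gain * dl + Q_gain * dl)
             - delta * lam k * Ns k * (Kphi * dl)) / rV k * rV k)
    with (mu k * Ns k - mu k * (I_gain * dl + Q_gain * dl) - delta * lam k * Ns k * (Kphi * dl))
    by (field; lra).
  set (c := lam_Nstar_sum * Kphi / (d + omega)).
  assert (Hc : c * (d + omega) = lam_Nstar_sum * Kphi) by (unfold c; field; lra).
  assert (0 <= c) by (unfold c; apply Rmult_le_pos; [nra|left; apply Rinv_0_lt_compat; lra]).
  assert (mu k * ((I_gain + Q_gain) * dl) <= rV k * ((I_gain + Q_gain) * dl))
    by (apply Rmult_le_compat_r; [apply Rmult_le_pos|]; lra).
  assert (delta * (lam k * Ns k) * Kphi * dl <= lam_Nstar_sum * Kphi * dl).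
  { apply Rmult_le_compat_r; [lra|]. apply Rmult_le_compat_r; [lra|]. nra. }
  assert (c * (d + omega) * dl <= c * rV k * dl)
    by (apply Rmult_le_compat_r; [lra|]; apply Rmult_le_compat_l; lra).
  assert (0 <= rV k * dl) by (apply Rmult_le_pos; lra).
  unfold V_gain. fold c. nra.
Qed.

Section Solution.
Variables S V I Q : nat -> R -> R.
Hypothesis Hsol : SVIQS_sol n p b d Phi lam phi mu beta gamma eta omega delta S V I Q.
Hypothesis Hinit : feasible_init n b d Phi S V I Q.

Local Notation Th := (Theta n p phi I).
Local Notation dS k t := (Lam b d Phi k - lam k * S k t * Th t + gamma * I k t
         + eta * Q k t + omega * V k t - (mu k + d) * S k t).
Local Notation dV k t := (mu k * S k t - delta * lam k * V k t * Th t - (d + omega) * V k t).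
Local Notation dI k t := (lam k * S k t * Th t + delta * lam k * V k t * Th t - cc * I k t).
Local Notation dQ k t := (beta * I k t - (eta + d) * Q k t).
Local Notation dTh t := (/ kavg n p * rsum n (fun i => phi i * p i * dI i t)).

Lemma S_deriv k t : (1 <= k <= n)%nat -> 0 < t -> derivable_pt_lim (S k) t (dS k t).
Proof. intros Hk Ht. now apply (Hsol k Hk). Qed.
Lemma V_deriv k t : (1 <= k <= n)%nat -> 0 < t -> derivable_pt_lim (V k) t (dV k t).
Proof. intros Hk Ht. now apply (Hsol k Hk). Qed.
Lemma I_deriv k t : (1 <= k <= n)%nat -> 0 < t -> derivable_pt_lim (I k) t (dI k t).
Proof. intros Hk Ht. now apply (Hsol k Hk). Qed.
Lemma Q_deriv k t : (1 <= k <= n)%nat -> 0 < t -> derivable_pt_lim (Q k) t (dQ k t).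
Proof. intros Hk Ht. now apply (Hsol k Hk). Qed.

Lemma S_right_cont k a : (1 <= k <= n)%nat -> 0 <= a -> right_cont (S k) a.
Proof.
  intros Hk. apply right_cont_of_rcont0 with (fun t => dS k t); [apply Hsol|]; auto using S_deriv.
Qed.
Lemma V_right_cont k a : (1 <= k <= n)%nat -> 0 <= a -> right_cont (V k) a.
Proof.
  intros Hk. apply right_cont_of_rcont0 with (fun t => dV k t); [apply Hsol|]; auto using V_deriv.
Qed.
Lemma I_right_cont k a : (1 <= k <= n)%nat -> 0 <= a -> right_cont (I k) a.
Proof.
  intros Hk. apply right_cont_of_rcont0 with (fun t => dI k t); [apply Hsol|]; auto using I_deriv.
Qed.
Lemma Q_right_cont k a : (1 <= k <= n)%nat -> 0 <= a -> right_cont (Q k) a.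
Proof.
  intros Hk. apply right_cont_of_rcont0 with (fun t => dQ k t); [apply Hsol|]; auto using Q_deriv.
Qed.

Lemma Theta_deriv t : 0 < t -> derivable_pt_lim Th t (dTh t).
Proof.
  intros Ht. apply (derivable_pt_lim_scal (fun s => rsum n (fun i => phi i * p i * I i s))).
  apply (derivable_pt_lim_rsum n (fun i s => phi i * p i * I i s)).
  intros k Hk. apply derivable_pt_lim_scal. now apply I_deriv.
Qed.

Lemma Theta_right_cont a : 0 <= a -> right_cont Th a.
Proof.
  intros Ha. apply (right_cont_mult (fun _ => / kavg n p)); [apply right_cont_const|].
  apply (right_cont_rsum n (fun i s => phi i * p i * I i s)). intros k Hk.
  apply (right_cont_mult (fun _ => phi k * p k)); [apply right_cont_const|].
  now apply I_right_cont.
Qed.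

Lemma population_const k t : (1 <= k <= n)%nat -> 0 <= t ->
  S k t + V k t + I k t + Q k t = Ns k.
Proof.
  intros Hk Ht. set (N s := S k s + V k s + I k s + Q k s).
  assert (HN' : forall s, 0 < s -> derivable_pt_lim N s (d * Ns k - d * N s)).
  { intros s Hs.
    replace (d * Ns k - d * N s) with (dS k s + dV k s + dI k s + dQ k s)
      by (unfold N; rewrite (Lam_eq k Hk); ring).
    apply (derivable_pt_lim_plus (fun s => S k s + V k s + I k s) (Q k)); [|now apply Q_deriv].
    apply (derivable_pt_lim_plus (fun s => S k s + V k s) (I k)); [|now apply I_deriv].
    apply (derivable_pt_lim_plus (S k) (V k)); [apply S_deriv|apply V_deriv]; auto. }
  assert (Hrc : right_cont N 0).
  { apply (right_cont_plus (fun s => S k s + V k s + I k s) (Q k));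
      [|apply Q_right_cont; auto; lra].
    apply (right_cont_plus (fun s => S k s + V k s) (I k)); [|apply I_right_cont; auto; lra].
    apply (right_cont_plus (S k) (V k)); [apply S_right_cont|apply V_right_cont]; auto; lra. }
  assert (HN0 : N 0 = Ns k) by (unfold N; apply Hinit; auto).
  pose proof (deriv_le_comparison N _ d (d * Ns k) 0 Hd HN' ltac:(intros; lra) Hrc t Ht).
  pose proof (deriv_ge_comparison N _ d (d * Ns k) 0 Hd HN' ltac:(intros; lra) Hrc t Ht).
  replace (d * Ns k / d) with (Ns k) in * by (field; lra).
  rewrite HN0 in *. unfold N in *. lra.
Qed.


Let lower_bounded e t := forall i, (1 <= i <= n)%nat ->
  - e <= S i t /\ - e <= V i t /\ - e <= I i t /\ - e <= Q i t.

Lemma lower_bounded_upper_bounds e t : 0 <= t -> 0 < e <= 1 -> lower_bounded e t ->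
  forall i, (1 <= i <= n)%nat -> S i t <= 4 /\ V i t <= 4 /\ I i t <= 4 /\ Q i t <= 4.
Proof.
  intros Ht He Hlow i Hi. pose proof (population_const i t Hi Ht).
  pose proof (Nstar_pos i Hi). specialize (Hlow i Hi). lra.
Qed.

Lemma lower_bounded_Theta e t : 0 <= t -> 0 < e <= 1 -> lower_bounded e t ->
  - (Kphi * e) <= Th t <= 4 * Kphi.
Proof.
  intros Ht He Hlow. pose proof kavg_pos.
  pose proof (lower_bounded_upper_bounds e t Ht He Hlow) as Hup.
  assert (Hw : forall c, / kavg n p * rsum n (fun i => phi i * p i * c) = c * Kphi).
  { intros c. unfold Kphi. rewrite (rsum_ext n _ (fun i => c * (phi i * p i))) by (intros; ring).
    rewrite rsum_scal. ring. }
  replace (- (Kphi * e)) with (- e * Kphi) by ring. rewrite <- Hw, <- (Hw 4). unfold Theta.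
  split; apply Rmult_le_compat_l; try (left; now apply Rinv_0_lt_compat);
    apply rsum_le; intros k Hk; apply Rmult_le_compat_l;
    try (left; apply Rmult_lt_0_compat; auto); [apply Hlow|apply Hup]; auto.
Qed.

Section FirstZero.
Variables (t e : R) (k : nat).
Hypotheses (Ht : 0 < t) (He : 0 < e <= 1) (Hk : (1 <= k <= n)%nat)
  (Hlow : lower_bounded e t).

Lemma Mrate_ge :
  e + (gamma + eta + omega + beta + mu k + 16 * (lam k * Kphi)) * e <= Mrate * e.
Proof.
  pose proof (lam_le_sum k Hk). pose proof (mu_le_sum k Hk). pose proof Kphi_pos.
  assert (lam k * Kphi <= rsum n lam * Kphi) by (apply Rmult_le_compat_r; lra).
  unfold Mrate. rewrite <- (Rmult_1_l e) at 1. rewrite <- Rmult_plus_distr_r.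
  apply Rmult_le_compat_r; lra.
Qed.

Lemma S_quasipositive : S k t = - e -> - (Mrate * e) < dS k t.
Proof.
  intros HS. destruct (Hlow k Hk) as [_ [HV [HI HQ]]].
  destruct (lower_bounded_Theta e t ltac:(lra) He Hlow) as [HTh _].
  pose proof (lam_le_sum k Hk). pose proof (mu_le_sum k Hk). pose proof Kphi_pos.
  pose proof Mrate_ge. pose proof (Nstar_pos k Hk).
  rewrite HS, (Lam_eq k Hk).
  assert (0 <= lam k * e * (Th t + Kphi * e)) by (repeat apply Rmult_le_pos; lra).
  assert (0 <= lam k * Kphi * e * (1 - e))
    by (apply Rmult_le_pos; [apply Rmult_le_pos; [apply Rmult_le_pos|]|]; lra).
  assert (0 <= gamma * (I k t + e)) by (apply Rmult_le_pos; lra).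
  assert (0 <= eta * (Q k t + e)) by (apply Rmult_le_pos; lra).
  assert (0 <= omega * (V k t + e)) by (apply Rmult_le_pos; lra).
  assert (0 <= (beta + mu k) * e) by (apply Rmult_le_pos; lra).
  assert (0 <= d * Ns k) by (apply Rmult_le_pos; lra).
  assert (0 <= (mu k + d) * e) by (apply Rmult_le_pos; lra).
  assert (0 <= 15 * (lam k * Kphi) * e)
    by (apply Rmult_le_pos; [apply Rmult_le_pos; [|apply Rmult_le_pos]|]; lra).
  nra.
Qed.

Lemma V_quasipositive : V k t = - e -> - (Mrate * e) < dV k t.
Proof.
  intros HV. destruct (Hlow k Hk) as [HS _].
  destruct (lower_bounded_Theta e t ltac:(lra) He Hlow) as [HTh _].
  pose proof (lam_le_sum k Hk). pose proof (mu_le_sum k Hk). pose proof Kphi_pos.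
  pose proof Mrate_ge.
  rewrite HV.
  assert (0 <= delta * lam k * e * (Th t + Kphi * e)) by (repeat apply Rmult_le_pos; lra).
  assert (0 <= lam k * Kphi * e * (1 - e))
    by (apply Rmult_le_pos; [apply Rmult_le_pos; [apply Rmult_le_pos|]|]; lra).
  assert (0 <= (1 - delta) * (lam k * Kphi * e * e))
    by (apply Rmult_le_pos;
        [|apply Rmult_le_pos; [apply Rmult_le_pos; [apply Rmult_le_pos|]|]]; lra).
  assert (0 <= mu k * (S k t + e)) by (apply Rmult_le_pos; lra).
  assert (0 <= (gamma + eta + omega + beta) * e) by (apply Rmult_le_pos; lra).
  assert (0 <= (d + omega) * e) by (apply Rmult_le_pos; lra).
  assert (0 <= 15 * (lam k * Kphi) * e)
    by (apply Rmult_le_pos; [apply Rmult_le_pos; [|apply Rmult_le_pos]|]; lra).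
  nra.
Qed.

Lemma I_quasipositive : I k t = - e -> - (Mrate * e) < dI k t.
Proof.
  intros HI. destruct (Hlow k Hk) as [HS [HV _]].
  destruct (lower_bounded_upper_bounds e t ltac:(lra) He Hlow k Hk) as [HS4 [HV4 _]].
  destruct (lower_bounded_Theta e t ltac:(lra) He Hlow) as [HTh HTh4].
  pose proof (lam_le_sum k Hk). pose proof (mu_le_sum k Hk). pose proof Kphi_pos.
  pose proof Mrate_ge.
  assert (HSTh : - (4 * (Kphi * e) + e * (4 * Kphi)) <= S k t * Th t)
    by (apply Rmult_lower_bound; nra).
  assert (HVTh : - (4 * (Kphi * e) + e * (4 * Kphi)) <= V k t * Th t)
    by (apply Rmult_lower_bound; nra).
  assert (lam k * (- (8 * Kphi * e)) <= lam k * (S k t * Th t))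
    by (apply Rmult_le_compat_l; lra).
  assert (delta * lam k * (- (8 * Kphi * e)) <= delta * lam k * (V k t * Th t))
    by (apply Rmult_le_compat_l; nra).
  assert (delta * lam k * (8 * Kphi * e) <= lam k * (8 * Kphi * e))
    by (apply Rmult_le_compat_r; nra).
  assert (0 <= (gamma + eta + omega + beta + mu k) * e) by (apply Rmult_le_pos; lra).
  assert (0 <= cc * e) by (apply Rmult_le_pos; lra).
  rewrite HI. lra.
Qed.

Lemma Q_quasipositive : Q k t = - e -> - (Mrate * e) < dQ k t.
Proof.
  intros HQ. destruct (Hlow k Hk) as [_ [_ [HI _]]].
  pose proof (lam_le_sum k Hk). pose proof (mu_le_sum k Hk). pose proof Kphi_pos.
  pose proof Mrate_ge.
  assert (0 <= beta * (I k t + e)) by (apply Rmult_le_pos; lra).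
  assert (0 <= (gamma + eta + omega + mu k) * e) by (apply Rmult_le_pos; lra).
  assert (0 <= (eta + d) * e) by (apply Rmult_le_pos; lra).
  assert (0 <= 16 * (lam k * Kphi) * e)
    by (apply Rmult_le_pos; [apply Rmult_le_pos; [|apply Rmult_le_pos]|]; lra).
  rewrite HQ. nra.
Qed.

End FirstZero.

Let compartment_list := list_prod [Susc; Vacc; Inf; Quar] (seq 1 n).

Lemma In_compartment_list c k : In (c, k) compartment_list <-> (1 <= k <= n)%nat.
Proof.
  unfold compartment_list. rewrite in_prod_iff, in_seq.
  split; [intros [_ H]; lia|intros H; split; [destruct c; simpl; tauto|lia]].
Qed.

Let value (j : compartment * nat) : R -> R :=
  match j with
  | (Susc, k) => S k | (Vacc, k) => V k | (Inf, k) => I k | (Quar, k) => Q k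
  end.

Let rate (j : compartment * nat) (t : R) : R :=
  match j with
  | (Susc, k) => dS k t | (Vacc, k) => dV k t | (Inf, k) => dI k t | (Quar, k) => dQ k t
  end.

Lemma solution_nonneg t k : 0 <= t -> (1 <= k <= n)%nat ->
  0 <= S k t /\ 0 <= V k t /\ 0 <= I k t /\ 0 <= Q k t.
Proof.
  intros Ht Hk. pose proof Kphi_pos.
  assert (HM : 0 <= Mrate).
  { assert (0 <= rsum n mu) by (apply rsum_nonneg; intros; left; auto).
    assert (0 <= rsum n lam) by (apply rsum_nonneg; intros; left; auto).
    unfold Mrate. nra. }
  assert (Hnn := quasipositive_nonneg _ compartment_list value rate Mrate HM).
  specialize (Hnn ltac:(intros [c i] Hi; apply In_compartment_list in Hi;
                        destruct (Hsol i Hi) as [? [? [? [? _]]]];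
                        destruct (Hinit i Hi) as [? [? [? [? _]]]];
                        destruct c; simpl; auto)).
  specialize (Hnn ltac:(intros [c i] s Hi Hs; apply In_compartment_list in Hi;
                        destruct c; simpl; auto using S_deriv, V_deriv, I_deriv, Q_deriv)).
  specialize (Hnn ltac:(intros [c i] s e Hi Hs He Hlow; apply In_compartment_list in Hi;
    assert (Hlow' : lower_bounded e s)
      by (intros i' Hi'; repeat split;
          [apply (Hlow (Susc, i'))|apply (Hlow (Vacc, i'))|apply (Hlow (Inf, i'))
          |apply (Hlow (Quar, i'))]; now apply In_compartment_list);
    destruct c; simpl;
    auto using S_quasipositive, V_quasipositive, I_quasipositive, Q_quasipositive)).
  repeat split; [apply (Hnn (Susc, k))|apply (Hnn (Vacc, k))|apply (Hnn (Inf, k))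
                |apply (Hnn (Quar, k))]; auto; now apply In_compartment_list.
Qed.

Lemma Theta_nonneg t : 0 <= t -> 0 <= Th t.
Proof.
  intros Ht. pose proof kavg_pos. apply Rmult_le_pos; [left; now apply Rinv_0_lt_compat|].
  apply rsum_nonneg. intros k Hk. apply Rmult_le_pos; [left; apply Rmult_lt_0_compat; auto|].
  apply (solution_nonneg t k Ht Hk).
Qed.

Lemma S_le_decay k t : (1 <= k <= n)%nat -> 0 <= t ->
  S k t <= Sd k + (S k 0 - Sd k) * exp (- rV k * (t - 0)).
Proof.
  intros Hk Ht. pose proof (Hmu k Hk).
  rewrite Sdfe_eq. apply (deriv_le_comparison (S k) (fun s => dS k s)); [lra| | | |lra].
  - intros s Hs. now apply S_deriv.
  - (* [gamma I + eta Q + omega V <= omega (I + Q + V)] is where [eta = gamma <= omega] enters *)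
    intros s Hs. destruct (solution_nonneg s k ltac:(lra) Hk) as [h1 [h2 [h3 h4]]].
    pose proof (Theta_nonneg s ltac:(lra)).
    assert (omega * (S k s + V k s + I k s + Q k s) = omega * Ns k)
      by (now rewrite (population_const k s Hk ltac:(lra))).
    rewrite (Lam_eq k Hk), <- Heg.
    assert (0 <= (omega - eta) * (I k s + Q k s)) by (apply Rmult_le_pos; lra).
    pose proof (Hlam k Hk).
    assert (0 <= lam k * S k s * Th s) by (apply Rmult_le_pos; [apply Rmult_le_pos|]; lra).
    nra.
  - apply S_right_cont; auto; lra.
Qed.

Lemma S_delta_V_le k t : (1 <= k <= n)%nat -> 0 <= t ->
  S k t + delta * V k t <= Sd k + delta * Vd k + Rabs (S k 0 - Sd k) * exp (- (d + omega) * t).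
Proof.
  intros Hk Ht. pose proof (S_le_decay k t Hk Ht). pose proof (Hmu k Hk).
  destruct (solution_nonneg t k Ht Hk) as [h1 [h2 [h3 h4]]].
  pose proof (population_const k t Hk Ht). pose proof (Sdfe_plus_Vdfe k Hk).
  assert (Hexp : exp (- rV k * (t - 0)) <= exp (- (d + omega) * t)).
  { destruct (Req_dec t 0) as [->|]; [right; f_equal; ring|].
    left. apply exp_increasing. nra. }
  pose proof (exp_pos (- rV k * (t - 0))).
  pose proof (Rle_abs (S k 0 - Sd k)). pose proof (Rabs_pos (S k 0 - Sd k)).
  assert (HS : S k t - Sd k <= Rabs (S k 0 - Sd k) * exp (- (d + omega) * t)).
  { apply Rle_trans with (Rabs (S k 0 - Sd k) * exp (- rV k * (t - 0))).
    - apply Rle_trans with ((S k 0 - Sd k) * exp (- rV k * (t - 0))); [lra|].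
      apply Rmult_le_compat_r; lra.
    - apply Rmult_le_compat_l; lra. }
  (* [S + delta V <= (1 - delta) S + delta (Sd + Vd)] because [V <= Ns - S] *)
  assert (delta * V k t <= delta * (Ns k - S k t)) by (apply Rmult_le_compat_l; lra).
  assert (0 <= Rabs (S k 0 - Sd k) * exp (- (d + omega) * t))
    by (apply Rmult_le_pos; [lra|left; apply exp_pos]).
  destruct (Rle_dec (S k t) (Sd k)).
  - assert (0 <= (1 - delta) * (Sd k - S k t)) by (apply Rmult_le_pos; lra). nra.
  - assert (0 <= delta * (S k t - Sd k)) by (apply Rmult_le_pos; lra). nra.
Qed.

Definition initial_S_gap :=
  / kavg n p * rsum n (fun i => lam i * phi i * p i * Rabs (S i 0 - Sd i)).

Lemma initial_S_gap_nonneg : 0 <= initial_S_gap.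
Proof.
  pose proof kavg_pos. apply Rmult_le_pos; [left; now apply Rinv_0_lt_compat|].
  apply rsum_nonneg. intros k Hk.
  apply Rmult_le_pos; [left; repeat apply Rmult_lt_0_compat; auto|apply Rabs_pos].
Qed.

Lemma Theta_deriv_le t : 0 < t ->
  dTh t <= Th t * (initial_S_gap * exp (- (d + omega) * t) - cc * (1 - R0)).
Proof.
  intros Ht. pose proof kavg_pos.
  set (Y := / kavg n p * rsum n (fun i => lam i * phi i * p i * (S i t + delta * V i t))).
  assert (E : dTh t = Th t * Y - cc * Th t).
  { unfold Y.
    rewrite (rsum_ext n _ (fun i => Th t * (lam i * phi i * p i * (S i t + delta * V i t))
                                   - cc * (phi i * p i * I i t))) by (intros; ring).
    rewrite rsum_minus, !rsum_scal. unfold Theta. ring. }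
  assert (HY : Y <= cc * R0 + initial_S_gap * exp (- (d + omega) * t)).
  { replace (cc * R0 + initial_S_gap * exp (- (d + omega) * t)) with
      (/ kavg n p * rsum n (fun i => lam i * phi i * p i * (Sd i + delta * Vd i)
         + exp (- (d + omega) * t) * (lam i * phi i * p i * Rabs (S i 0 - Sd i))))
      by (rewrite R0_eq, rsum_plus, rsum_scal; unfold initial_S_gap; ring).
    apply Rmult_le_compat_l; [left; now apply Rinv_0_lt_compat|].
    apply rsum_le. intros k Hk.
    pose proof (S_delta_V_le k t Hk ltac:(lra)).
    assert (0 <= lam k * phi k * p k) by (left; repeat apply Rmult_lt_0_compat; auto).
    nra. }
  pose proof (Theta_nonneg t ltac:(lra)).
  rewrite E. assert (Th t * Y <= Th t * (cc * R0 + initial_S_gap * exp (- (d + omega) * t)))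
    by (apply Rmult_le_compat_l; lra).
  nra.
Qed.

Lemma I_deriv_le k t : (1 <= k <= n)%nat -> 0 < t ->
  dI k t <= lam k * Ns k * Th t - cc * I k t.
Proof.
  intros Hk Ht. destruct (solution_nonneg t k ltac:(lra) Hk) as [h1 [h2 [h3 h4]]].
  pose proof (population_const k t Hk ltac:(lra)). pose proof (Theta_nonneg t ltac:(lra)).
  pose proof (Hlam k Hk).
  assert (S k t + delta * V k t <= Ns k) by nra.
  assert (lam k * Th t * (S k t + delta * V k t) <= lam k * Th t * Ns k)
    by (apply Rmult_le_compat_l; [apply Rmult_le_pos|]; lra).
  nra.
Qed.

Lemma V_deriv_le k t : (1 <= k <= n)%nat -> 0 < t -> dV k t <= mu k * Ns k - rV k * V k t.
Proof.
  intros Hk Ht. destruct (solution_nonneg t k ltac:(lra) Hk) as [h1 [h2 [h3 h4]]].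
  pose proof (population_const k t Hk ltac:(lra)). pose proof (Theta_nonneg t ltac:(lra)).
  pose proof (Hlam k Hk). pose proof (Hmu k Hk).
  assert (0 <= delta * lam k * V k t * Th t)
    by (apply Rmult_le_pos; [apply Rmult_le_pos; [apply Rmult_le_pos|]|]; lra).
  assert (mu k * S k t <= mu k * (Ns k - V k t)) by (apply Rmult_le_compat_l; lra).
  lra.
Qed.

Lemma V_deriv_ge k t : (1 <= k <= n)%nat -> 0 < t ->
  mu k * Ns k - mu k * (I k t + Q k t) - delta * lam k * Ns k * Th t - rV k * V k t <= dV k t.
Proof.
  intros Hk Ht. destruct (solution_nonneg t k ltac:(lra) Hk) as [h1 [h2 [h3 h4]]].
  pose proof (population_const k t Hk ltac:(lra)). pose proof (Theta_nonneg t ltac:(lra)).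
  pose proof (Hlam k Hk). pose proof (Hmu k Hk).
  assert (delta * lam k * Th t * V k t <= delta * lam k * Th t * Ns k)
    by (apply Rmult_le_compat_l; [apply Rmult_le_pos; [apply Rmult_le_pos|]|]; lra).
  nra.
Qed.

Lemma Theta_le_initial : initial_S_gap <= cc * (1 - R0) -> forall t, 0 <= t -> Th t <= Th 0.
Proof.
  intros Hgap t Ht. apply (le_of_deriv_nonpos Th (fun s => dTh s)); auto.
  - exact Theta_deriv.
  - intros s Hs. pose proof (Theta_deriv_le s Hs). pose proof (Theta_nonneg s ltac:(lra)).
    pose proof (exp_neg_le_1 (d + omega) s ltac:(lra) ltac:(lra)).
    pose proof initial_S_gap_nonneg.
    assert (initial_S_gap * exp (- (d + omega) * s) <= initial_S_gap * 1)
      by (apply Rmult_le_compat_l; lra).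
    assert (Th s * (initial_S_gap * exp (- (d + omega) * s) - cc * (1 - R0)) <= Th s * 0)
      by (apply Rmult_le_compat_l; lra).
    lra.
  - apply Theta_right_cont. lra.
Qed.

Lemma I_le_Rmax k th : (1 <= k <= n)%nat -> (forall t, 0 <= t -> Th t <= th) ->
  forall t, 0 <= t -> I k t <= Rmax (lam k * Ns k * th / cc) (I k 0).
Proof.
  intros Hk Hth. pose proof (Hlam k Hk). pose proof (Nstar_pos k Hk).
  apply (le_Rmax_of_deriv_le (I k) (fun s => dI k s)); [lra| | |].
  - intros s Hs. now apply I_deriv.
  - intros s Hs. pose proof (I_deriv_le k s Hk Hs). specialize (Hth s ltac:(lra)).
    assert (lam k * Ns k * Th s <= lam k * Ns k * th) by (apply Rmult_le_compat_l; nra).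
    lra.
  - apply I_right_cont; auto; lra.
Qed.

Lemma Q_le_Rmax k ib : (1 <= k <= n)%nat -> (forall t, 0 <= t -> I k t <= ib) ->
  forall t, 0 <= t -> Q k t <= Rmax (beta * ib / (eta + d)) (Q k 0).
Proof.
  intros Hk Hib.
  apply (le_Rmax_of_deriv_le (Q k) (fun s => dQ k s)); [lra| | |].
  - intros s Hs. now apply Q_deriv.
  - intros s Hs. specialize (Hib s ltac:(lra)). nra.
  - apply Q_right_cont; auto; lra.
Qed.

Lemma V_le_Rmax k t : (1 <= k <= n)%nat -> 0 <= t -> V k t <= Rmax (Vd k) (V k 0).
Proof.
  intros Hk Ht. pose proof (Hmu k Hk). rewrite Vdfe_eq.
  apply (le_Rmax_of_deriv_le (V k) (fun s => dV k s)); auto; [lra| | |].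
  - intros s Hs. now apply V_deriv.
  - intros s Hs. now apply V_deriv_le.
  - apply V_right_cont; auto; lra.
Qed.

Lemma V_ge_Rmin k ib qb th : (1 <= k <= n)%nat ->
  (forall t, 0 <= t -> I k t <= ib /\ Q k t <= qb /\ Th t <= th) ->
  forall t, 0 <= t ->
  Rmin ((mu k * Ns k - mu k * (ib + qb) - delta * lam k * Ns k * th) / rV k) (V k 0) <= V k t.
Proof.
  intros Hk Hb3. pose proof (Hmu k Hk). pose proof (Hlam k Hk). pose proof (Nstar_pos k Hk).
  apply (Rmin_le_of_deriv_ge (V k) (fun s => dV k s)); [lra| | |].
  - intros s Hs. now apply V_deriv.
  - intros s Hs. pose proof (V_deriv_ge k s Hk Hs).
    destruct (Hb3 s ltac:(lra)) as [HI [HQ HTh]].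
    assert (mu k * (I k s + Q k s) <= mu k * (ib + qb)) by (apply Rmult_le_compat_l; lra).
    assert (delta * lam k * Ns k * Th s <= delta * lam k * Ns k * th)
      by (apply Rmult_le_compat_l; [apply Rmult_le_pos; [apply Rmult_le_pos|]|]; lra).
    lra.
  - apply V_right_cont; auto; lra.
Qed.

Lemma Theta_eventually_le : R0 < 1 -> forall x, 0 < x -> eventually (fun t => Th t <= x).
Proof.
  intros HR x Hx. set (r := cc * (1 - R0) / 2).
  assert (Hr : 0 < r) by (unfold r; apply Rdiv_lt_0_compat; [apply Rmult_lt_0_compat|]; lra).
  destruct (eventually_le_of_deriv_le Th (fun s => dTh s) (fun s => dTh s + r * Th s) r 0 Hr)
    with (x := x) as [T HT]; auto.
  - exact Theta_deriv.
  - intros t Ht. lra.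
  - (* once the initial gap has decayed below r, Theta decays at rate r *)
    intros y Hy.
    destruct (eventually_exp_decay_le initial_S_gap (d + omega) 0 r ltac:(lra) Hr) as [T HT].
    exists (Rmax T 1). intros t Ht. pose proof (Rmax_l T 1). pose proof (Rmax_r T 1).
    specialize (HT t ltac:(lra)). rewrite Rminus_0_r, Rabs_right in HT
      by (apply Rle_ge, initial_S_gap_nonneg).
    pose proof (Theta_deriv_le t ltac:(lra)). pose proof (Theta_nonneg t ltac:(lra)).
    assert (Th t * (initial_S_gap * exp (- (d + omega) * t) - cc * (1 - R0)) <= Th t * (- r))
      by (apply Rmult_le_compat_l; unfold r in *; lra).
    lra.
  - exists T. intros t Ht. specialize (HT t Ht). unfold Rdiv in HT. rewrite Rmult_0_l in HT. lra.
Qed.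

Lemma I_eventually_le k : R0 < 1 -> (1 <= k <= n)%nat ->
  forall x, 0 < x -> eventually (fun t => I k t <= x).
Proof.
  intros HR Hk x Hx. pose proof (Hlam k Hk). pose proof (Nstar_pos k Hk).
  assert (HlN : 0 < lam k * Ns k) by nra.
  destruct (eventually_le_of_deriv_le (I k) (fun s => dI k s) (fun s => lam k * Ns k * Th s)
              cc 0 ltac:(lra)) with (x := x) as [T HT]; auto.
  - intros t Ht. now apply I_deriv.
  - intros t Ht. now apply I_deriv_le.
  - intros y Hy. destruct (Theta_eventually_le HR (y / (lam k * Ns k))) as [T HT];
      [apply Rdiv_lt_0_compat; lra|].
    exists T. intros t Ht. specialize (HT t Ht).
    apply Rmult_le_compat_l with (r := lam k * Ns k) in HT; [|lra].
    replace (lam k * Ns k * (y / (lam k * Ns k))) with y in HT by (field; lra). lra.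
  - exists T. intros t Ht. specialize (HT t Ht). unfold Rdiv in HT. rewrite Rmult_0_l in HT. lra.
Qed.

Lemma Q_eventually_le k : R0 < 1 -> (1 <= k <= n)%nat ->
  forall x, 0 < x -> eventually (fun t => Q k t <= x).
Proof.
  intros HR Hk x Hx.
  destruct (eventually_le_of_deriv_le (Q k) (fun s => dQ k s) (fun s => beta * I k s)
              (eta + d) 0 ltac:(lra)) with (x := x) as [T HT]; auto.
  - intros t Ht. now apply Q_deriv.
  - intros t Ht. lra.
  - intros y Hy. destruct (I_eventually_le k HR Hk (y / beta)) as [T HT];
      [apply Rdiv_lt_0_compat; lra|].
    exists T. intros t Ht. specialize (HT t Ht).
    apply Rmult_le_compat_l with (r := beta) in HT; [|lra].
    replace (beta * (y / beta)) with y in HT by (field; lra). lra.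
  - exists T. intros t Ht. specialize (HT t Ht). unfold Rdiv in HT. rewrite Rmult_0_l in HT. lra.
Qed.

Lemma V_eventually_le k : (1 <= k <= n)%nat ->
  forall x, 0 < x -> eventually (fun t => V k t <= Vd k + x).
Proof.
  intros Hk. pose proof (Hmu k Hk). rewrite Vdfe_eq.
  apply (eventually_le_of_deriv_le (V k) (fun s => dV k s) (fun _ => mu k * Ns k)); [lra| | |].
  - intros t Ht. now apply V_deriv.
  - intros t Ht. now apply V_deriv_le.
  - intros y Hy. exists 0. intros. lra.
Qed.

Lemma V_eventually_ge k : R0 < 1 -> (1 <= k <= n)%nat ->
  forall x, 0 < x -> eventually (fun t => Vd k - x <= V k t).
Proof.
  intros HR Hk. pose proof (Hmu k Hk). pose proof (Hlam k Hk). pose proof (Nstar_pos k Hk).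
  rewrite Vdfe_eq.
  apply (eventually_ge_of_deriv_ge (V k) (fun s => dV k s)
           (fun s => mu k * Ns k - mu k * (I k s + Q k s) - delta * lam k * Ns k * Th s));
    [lra| | |].
  - intros t Ht. now apply V_deriv.
  - intros t Ht. now apply V_deriv_ge.
  - (* the loss terms mu (I + Q) + delta lam Ns Theta all tend to 0 *)
    intros y Hy. set (c := mu k + lam k * Ns k + 1).
    assert (Hc : 0 < c) by (unfold c; nra).
    destruct (eventually_and _ _ (eventually_and _ _
      (I_eventually_le k HR Hk (y / (3 * c)) ltac:(apply Rdiv_lt_0_compat; lra))
      (Q_eventually_le k HR Hk (y / (3 * c)) ltac:(apply Rdiv_lt_0_compat; lra)))
      (Theta_eventually_le HR (y / (3 * c)) ltac:(apply Rdiv_lt_0_compat; lra))) as [T HT].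
    exists (Rmax T 0). intros t Ht. pose proof (Rmax_l T 0). pose proof (Rmax_r T 0).
    destruct (HT t ltac:(lra)) as [[HI HQ] HTh].
    destruct (solution_nonneg t k ltac:(lra) Hk) as [_ [_ [HI0 HQ0]]].
    pose proof (Theta_nonneg t ltac:(lra)).
    set (z := y / (3 * c)) in *.
    assert (Hz : 0 < z) by (unfold z; apply Rdiv_lt_0_compat; lra).
    assert (E : y = 3 * c * z) by (unfold z; field; lra).
    assert (mu k * (I k t + Q k t) <= mu k * (2 * z)) by (apply Rmult_le_compat_l; lra).
    assert (0 <= lam k * Ns k * Th t) by (apply Rmult_le_pos; nra).
    assert (lam k * Ns k * Th t <= lam k * Ns k * z) by (apply Rmult_le_compat_l; nra).
    assert (0 <= (1 - delta) * (lam k * Ns k * Th t)) by (apply Rmult_le_pos; lra).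
    unfold c in E. nra.
Qed.

Section NearEquilibrium.
Variable dl : R.
Hypotheses (Hdl : 0 < dl) (HKdl : Klam * dl <= cc * (1 - R0))
  (Hclose : forall k, (1 <= k <= n)%nat ->
     Rabs (S k 0 - Sd k) < dl /\ Rabs (V k 0 - Vd k) < dl /\
     Rabs (I k 0) < dl /\ Rabs (Q k 0) < dl).

Lemma weighted_sum_le_dl (w x : nat -> R) : (forall k, (1 <= k <= n)%nat -> 0 < w k) ->
  (forall k, (1 <= k <= n)%nat -> x k <= dl) ->
  / kavg n p * rsum n (fun i => w i * x i) <= / kavg n p * rsum n w * dl.
Proof.
  intros Hw Hx. pose proof kavg_pos.
  replace (/ kavg n p * rsum n w * dl) with (/ kavg n p * rsum n (fun i => w i * dl))
    by (rewrite (rsum_ext n _ (fun i => dl * w i)), rsum_scal by (intros; ring); ring).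
  apply Rmult_le_compat_l; [left; now apply Rinv_0_lt_compat|].
  apply rsum_le. intros k Hk. specialize (Hw k Hk). specialize (Hx k Hk). nra.
Qed.

Lemma Theta_le_near t : 0 <= t -> Th t <= Kphi * dl.
Proof.
  intros Ht. apply Rle_trans with (Th 0).
  - apply Theta_le_initial; auto. apply Rle_trans with (Klam * dl); auto.
    apply weighted_sum_le_dl; [intros; repeat apply Rmult_lt_0_compat; auto|].
    intros k Hk. left. apply Hclose; auto.
  - apply weighted_sum_le_dl; [intros; apply Rmult_lt_0_compat; auto|].
    intros k Hk. destruct (Hclose k Hk) as [_ [_ [HI _]]].
    pose proof (Rle_abs (I k 0)). lra.
Qed.

Lemma I_le_near k t : (1 <= k <= n)%nat -> 0 <= t -> I k t <= I_gain * dl.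
Proof.
  intros Hk Ht. pose proof (lam_Nstar_le_sum k Hk). pose proof Kphi_pos.
  eapply Rle_trans; [apply (I_le_Rmax k (Kphi * dl)); auto using Theta_le_near|].
  destruct (Hclose k Hk) as [_ [_ [HI _]]]. pose proof (Rle_abs (I k 0)).
  assert (lam k * Ns k * (Kphi * dl) <= lam_Nstar_sum * Kphi * dl).
  { rewrite <- Rmult_assoc. apply Rmult_le_compat_r; [lra|]. apply Rmult_le_compat_r; lra. }
  assert (lam k * Ns k * (Kphi * dl) / cc <= lam_Nstar_sum * Kphi / cc * dl).
  { unfold Rdiv. replace (lam_Nstar_sum * Kphi * / cc * dl) with (lam_Nstar_sum * Kphi * dl * / cc)
      by ring.
    apply Rmult_le_compat_r; [left; apply Rinv_0_lt_compat|]; lra. }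
  assert (0 <= lam k * Ns k * (Kphi * dl) / cc)
    by (apply Rmult_le_pos; [apply Rmult_le_pos; nra|left; apply Rinv_0_lt_compat; lra]).
  unfold I_gain. rewrite Rmult_plus_distr_r, Rmult_1_l. apply Rmax_lub; lra.
Qed.

Lemma Q_le_near k t : (1 <= k <= n)%nat -> 0 <= t -> Q k t <= Q_gain * dl.
Proof.
  intros Hk Ht.
  eapply Rle_trans; [apply (Q_le_Rmax k (I_gain * dl)); auto using I_le_near|].
  destruct (Hclose k Hk) as [_ [_ [_ HQ]]]. pose proof (Rle_abs (Q k 0)).
  replace (beta * (I_gain * dl) / (eta + d)) with (beta * I_gain / (eta + d) * dl) by (field; lra).
  destruct gains_ge_1 as [HIg _].
  assert (0 <= beta * I_gain / (eta + d) * dl)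
    by (apply Rmult_le_pos; [apply Rmult_le_pos; [nra|left; apply Rinv_0_lt_compat]|]; lra).
  unfold Q_gain. rewrite Rmult_plus_distr_r, Rmult_1_l. apply Rmax_lub; lra.
Qed.

Lemma V_near k t : (1 <= k <= n)%nat -> 0 <= t -> Rabs (V k t - Vd k) <= V_gain * dl.
Proof.
  intros Hk Ht. destruct gains_ge_1 as [HIg [HQg HVg]].
  destruct (Hclose k Hk) as [_ [HV _]]. apply Rabs_def2 in HV.
  pose proof (V_le_Rmax k t Hk Ht). pose proof (Rmax_l (Vd k) (V k 0)).
  assert (Rmax (Vd k) (V k 0) <= Vd k + V_gain * dl) by (apply Rmax_lub; nra).
  pose proof (V_ge_Rmin k (I_gain * dl) (Q_gain * dl) (Kphi * dl) Hk
    ltac:(intros s Hs; repeat split; auto using I_le_near, Q_le_near, Theta_le_near) t Ht).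
  enough (Vd k - V_gain * dl <=
    Rmin ((mu k * Ns k - mu k * (I_gain * dl + Q_gain * dl) - delta * lam k * Ns k * (Kphi * dl))
          / rV k) (V k 0)) by (apply Rabs_le; lra).
  apply Rmin_glb; [apply Vdfe_minus_gain_le; auto; lra|nra].
Qed.

Lemma solution_near k t : (1 <= k <= n)%nat -> 0 <= t ->
  let C := I_gain + Q_gain + V_gain in
  Rabs (S k t - Sd k) <= C * dl /\ Rabs (V k t - Vd k) <= C * dl /\
  Rabs (I k t) <= C * dl /\ Rabs (Q k t) <= C * dl.
Proof.
  intros Hk Ht C. destruct gains_ge_1 as [HIg [HQg HVg]].
  pose proof (I_le_near k t Hk Ht). pose proof (Q_le_near k t Hk Ht).
  pose proof (V_near k t Hk Ht) as HV. pose proof (Rle_abs (V k t - Vd k)).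
  pose proof (Rle_abs (- (V k t - Vd k))). rewrite Rabs_Ropp in *.
  destruct (solution_nonneg t k Ht Hk) as [_ [_ [HI HQ]]].
  pose proof (population_const k t Hk Ht). pose proof (Sdfe_plus_Vdfe k Hk).
  assert (C * dl = I_gain * dl + Q_gain * dl + V_gain * dl) by (unfold C; ring).
  assert (0 <= I_gain * dl) by nra. assert (0 <= Q_gain * dl) by nra.
  assert (0 <= V_gain * dl) by nra.
  repeat split; [apply Rabs_le; lra|apply Rabs_le; lra
                |rewrite Rabs_right; lra|rewrite Rabs_right; lra].
Qed.

End NearEquilibrium.

Lemma solution_eventually_near k : R0 < 1 -> (1 <= k <= n)%nat -> forall eps, 0 < eps ->
  eventually (fun t => Rabs (S k t - Sd k) < eps /\ Rabs (V k t - Vd k) < eps /\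
                       Rabs (I k t) < eps /\ Rabs (Q k t) < eps).
Proof.
  intros HR Hk eps Heps.
  destruct (eventually_and _ _
    (eventually_and _ _ (I_eventually_le k HR Hk (eps / 4) ltac:(lra))
                        (Q_eventually_le k HR Hk (eps / 4) ltac:(lra)))
    (eventually_and _ _ (V_eventually_le k Hk (eps / 4) ltac:(lra))
                        (V_eventually_ge k HR Hk (eps / 4) ltac:(lra)))) as [T HT].
  exists (Rmax T 0). intros t Ht. pose proof (Rmax_l T 0). pose proof (Rmax_r T 0).
  destruct (HT t ltac:(lra)) as [[HI HQ] [HVu HVl]].
  destruct (solution_nonneg t k ltac:(lra) Hk) as [_ [_ [HI0 HQ0]]].
  pose proof (population_const k t Hk ltac:(lra)). pose proof (Sdfe_plus_Vdfe k Hk).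
  repeat split; [apply Rabs_def1; lra|apply Rabs_def1; lra
                |rewrite Rabs_right; lra|rewrite Rabs_right; lra].
Qed.

End Solution.

Lemma SVIQS_stable : R0 < 1 -> forall eps, 0 < eps -> exists dl, 0 < dl /\
  forall S V I Q : nat -> R -> R,
    SVIQS_sol n p b d Phi lam phi mu beta gamma eta omega delta S V I Q ->
    feasible_init n b d Phi S V I Q ->
    (forall k, (1 <= k <= n)%nat ->
       Rabs (S k 0 - Sd k) < dl /\ Rabs (V k 0 - Vd k) < dl /\
       Rabs (I k 0) < dl /\ Rabs (Q k 0) < dl) ->
    forall t, 0 <= t -> forall k, (1 <= k <= n)%nat ->
       Rabs (S k t - Sd k) < eps /\ Rabs (V k t - Vd k) < eps /\
       Rabs (I k t) < eps /\ Rabs (Q k t) < eps.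
Proof.
  intros HR eps Heps. destruct gains_ge_1 as [HIg [HQg HVg]]. pose proof Klam_pos.
  set (C := I_gain + Q_gain + V_gain). assert (HC : 0 < C) by (unfold C; lra).
  pose proof (Rmin_l (eps / (C + 1)) (cc * (1 - R0) / (Klam + 1))).
  pose proof (Rmin_r (eps / (C + 1)) (cc * (1 - R0) / (Klam + 1))).
  set (dl := Rmin (eps / (C + 1)) (cc * (1 - R0) / (Klam + 1))) in *.
  assert (Hc : 0 < cc * (1 - R0)) by (apply Rmult_lt_0_compat; lra).
  assert (Hdl : 0 < dl) by (apply Rmin_pos; apply Rdiv_lt_0_compat; lra).
  assert (HCdl : C * dl < eps).
  { apply Rlt_le_trans with ((C + 1) * dl); [rewrite Rmult_plus_distr_r; lra|].
    apply Rle_trans with ((C + 1) * (eps / (C + 1))); [apply Rmult_le_compat_l; lra|].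
    right. field. lra. }
  assert (HKdl : Klam * dl <= cc * (1 - R0)).
  { apply Rle_trans with ((Klam + 1) * dl); [rewrite Rmult_plus_distr_r; lra|].
    apply Rle_trans with ((Klam + 1) * (cc * (1 - R0) / (Klam + 1)));
      [apply Rmult_le_compat_l; lra|].
    right. field. lra. }
  exists dl. split; auto.
  intros S V I Q Hsol Hinit Hclose t Ht k Hk.
  destruct (solution_near S V I Q Hsol Hinit dl Hdl HKdl Hclose k t Hk Ht) as [HS [HV [HI HQ]]].
  fold C in HS, HV, HI, HQ. lra.
Qed.

End Model.

Theorem theorem4p8
  (n : nat) (p : nat -> R) (b d Phi : R)
  (lam phi mu : nat -> R) (beta gamma eta omega delta : R)
  (Hn : (1 <= n)%nat)
  (Hp : forall k, (1 <= k <= n)%nat -> 0 < p k)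
  (Hpsum : rsum n p = 1)
  (Hd : 0 < d) (Hbd : d < b)
  (HPhi : 0 < Phi)
  (HPhieq : Phi = / kavg n p * rsum n (fun i => INR i * p i * b * Phi / (d + b * INR i * Phi)))
  (Hlam : forall k, (1 <= k <= n)%nat -> 0 < lam k)
  (Hphi : forall k, (1 <= k <= n)%nat -> 0 < phi k)
  (Hmu : forall k, (1 <= k <= n)%nat -> 0 < mu k)
  (Hbeta : 0 < beta) (Hgamma : 0 < gamma) (Heta : 0 < eta) (Homega : 0 < omega)
  (Hdelta : 0 <= delta <= 1)
  (Hoe : eta <= omega) (Heg : eta = gamma)
  (HR0 : R0_SVIQS n p b d Phi lam phi mu beta gamma omega delta < 1) :
  (forall eps, 0 < eps -> exists dl, 0 < dl /\
     forall S V I Q : nat -> R -> R,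
       SVIQS_sol n p b d Phi lam phi mu beta gamma eta omega delta S V I Q ->
       feasible_init n b d Phi S V I Q ->
       (forall k, (1 <= k <= n)%nat ->
          Rabs (S k 0 - Sdfe b d Phi mu omega k) < dl /\
          Rabs (V k 0 - Vdfe b d Phi mu omega k) < dl /\
          Rabs (I k 0) < dl /\ Rabs (Q k 0) < dl) ->
       forall t, 0 <= t -> forall k, (1 <= k <= n)%nat ->
          Rabs (S k t - Sdfe b d Phi mu omega k) < eps /\
          Rabs (V k t - Vdfe b d Phi mu omega k) < eps /\
          Rabs (I k t) < eps /\ Rabs (Q k t) < eps)
  /\
  (forall S V I Q : nat -> R -> R,
     SVIQS_sol n p b d Phi lam phi mu beta gamma eta omega delta S V I Q ->
     feasible_init n b d Phi S V I Q ->
     forall k, (1 <= k <= n)%nat ->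
     forall eps, 0 < eps -> exists T, forall t, T <= t ->
        Rabs (S k t - Sdfe b d Phi mu omega k) < eps /\
        Rabs (V k t - Vdfe b d Phi mu omega k) < eps /\
        Rabs (I k t) < eps /\ Rabs (Q k t) < eps).
Proof.
  assert (Hb : 0 < b) by lra.
  split.
  - exact (SVIQS_stable n p b d Phi lam phi mu beta gamma eta omega delta Hn Hp Hd Hb HPhi
             Hlam Hphi Hmu Hbeta Heta Homega Hdelta Hoe Heg HR0).
  - intros S V I Q Hsol Hinit k Hk.
    exact (solution_eventually_near n p b d Phi lam phi mu beta gamma eta omega delta Hn Hp Hd Hb
             HPhi Hlam Hphi Hmu Hbeta Heta Homega Hdelta Hoe Heg S V I Q Hsol Hinit k HR0 Hk).
Qed.
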